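(* Let $\tau_\mathsf{I} \geq 0$ and $\tau_\mathsf{D} \in [0,1)$ be real numbers and define $$\delta_\mathsf{ID}(\tau_\mathsf{I},\tau_\mathsf{D}) = \frac{\tau_\mathsf{I}+\tau_\mathsf{D}(1-\tau_\mathsf{D})}{\tau_\mathsf{I}+1-\tau_\mathsf{D}} = 1 - \frac{(1-\tau_\mathsf{D})^2}{\tau_\mathsf{I}+1-\tau_\mathsf{D}}.$$ Let $C\subseteq\Sigma^n$ (with $\Sigma$ a finite alphabet and $|C|\ge 2$) be a code of minimum Levenshtein distance $d = 2\delta n$ with $\delta > \delta_\mathsf{ID}(\tau_\mathsf{I},\tau_\mathsf{D})$, and put $\gamma = \delta - \delta_\mathsf{ID}(\tau_\mathsf{I},\tau_\mathsf{D})>0$. Then $C$ is $(\lfloor\tau_\mathsf{I} n\rfloor, \lfloor\tau_\mathsf{D} n\rfloor, \ell)$-list decodable for $$\ell = \left\lfloor \frac{\delta(\tau_\mathsf{I}+1)}{\gamma\,(\tau_\mathsf{I} + 1-\tau_\mathsf{D})}\right\rfloor.$$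
   Context: For words $x,y$ over $\Sigma$, the Levenshtein distance $d_\mathsf{L}(x,y)$ is the minimum number of single-symbol insertions and deletions needed to transform $x$ into $y$; the minimum Levenshtein distance of a code $C$ is $\min\{d_\mathsf{L}(c_1,c_2): c_1\neq c_2 \in C\}$. For a word $v$ and non-negative integers $a,b$, $B_\mathsf{L}(v,a,b)$ is the set of words obtainable from $v$ by at most $a$ insertions and at most $b$ deletions. A code $C\subseteq \Sigma^n$ is $(t_\mathsf{I},t_\mathsf{D},\ell)$-list decodable if $|B_\mathsf{L}(v,t_\mathsf{D},t_\mathsf{I})\cap C|\le \ell$ for every word $v$ over $\Sigma$ (of any length). *)

From HB Require Import structures.
From mathcomp Require Import all_boot all_order all_algebra.
Set Implicit Arguments. Unset Strict Implicit. Unset Printing Implicit Defensive.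
Import Order.TTheory GRing.Theory Num.Theory.

Section Lev.
Variable T : eqType.

Definition del1 (x y : seq T) : Prop :=
  exists2 i, i < size x & y = take i x ++ drop i.+1 x.
Definition ins1 (x y : seq T) : Prop := del1 y x.

Inductive idops : nat -> nat -> seq T -> seq T -> Prop :=
| idops0 x : idops 0 0 x x
| idopsI i j x y z : ins1 x y -> idops i j y z -> idops i.+1 j x z
| idopsD i j x y z : del1 x y -> idops i j y z -> idops i j.+1 x z.

Definition edits (k : nat) (x y : seq T) : Prop :=
  exists i j, i + j = k /\ idops i j x y.

Definition lev_dist_is (x y : seq T) (k : nat) : Prop :=
  edits k x y /\ forall k', edits k' x y -> k <= k'.

Definition in_ballL (v : seq T) (a b : nat) (w : seq T) : Prop :=
  exists i j, [/\ i <= a, j <= b & idops i j v w].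
End Lev.

Definition min_lev_dist (Sigma : finType) (n : nat)
    (C : {set n.-tuple Sigma}) (d : nat) : Prop :=
  (exists c1 c2, [/\ c1 \in C, c2 \in C, c1 != c2 & lev_dist_is (val c1) (val c2) d])
  /\ forall c1 c2 k, c1 \in C -> c2 \in C -> c1 != c2 ->
       lev_dist_is (val c1) (val c2) k -> d <= k.

(* C is (tI, tD, l)-list decodable: |B_L(v,tD,tI) ∩ C| <= l for every word v;
   stated as: every subset of C contained in the ball has at most l elements *)
Definition list_decodable (Sigma : finType) (n : nat)
    (C : {set n.-tuple Sigma}) (tI tD l : nat) : Prop :=
  forall (v : seq Sigma) (S : {set n.-tuple Sigma}),
    S \subset C -> (forall c, c \in S -> in_ballL v tD tI (val c)) ->
    #|S| <= l.

Local Open Scope ring_scope.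
Definition deltaID (R : numFieldType) (tauI tauD : R) : R :=
  (tauI + tauD * (1 - tauD)) / (tauI + 1 - tauD).

From HB Require Import structures.
From mathcomp Require Import all_boot all_order all_algebra.
From mathcomp Require Import zify ring lra.
From Stdlib Require Import ClassicalEpsilon.
Import Order.TTheory GRing.Theory Num.Theory.
Set Implicit Arguments. Unset Strict Implicit. Unset Printing Implicit Defensive.

(* Each codeword c within the ball around the received word v shares with v a
   common subsequence of length at least L = max(|v| - t_I, n - t_D); its positions
   in v give a 0/1 mask of weight exactly L on the |v| positions of v.  The masks of
   two distinct codewords overlap in a common subsequence of both, hence in at most
   n - d/2 = n - delta n positions.  For m such constant-weight masks, Cauchy-Schwarz
   applied to the column sums gives the Johnson inequality
   m (L^2 - |v| (n - delta n)) <= |v| (L - (n - delta n)), and an elementary analysis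
   of this bound for L >= n - tau_D n and |v| <= L + tau_I n yields the claimed list size. *)

Section EditOperations.
Variable T : eqType.
Implicit Types (a : T) (w x y z : seq T).

Lemma idops_trans i j i' j' x y z :
  idops i j x y -> idops i' j' y z -> idops (i + i') (j + j') x z.
Proof.
elim=> {i j x y} [x|i j x y w H _ IH|i j x y w H _ IH] Hz //.
- by rewrite addSn; apply: idopsI H (IH Hz).
- by rewrite addSn; apply: idopsD H (IH Hz).
Qed.

Lemma idops_sym i j x y : idops i j x y -> idops j i y x.
Proof.
elim=> {i j x y} [x|i j x y w H _ IH|i j x y w H _ IH].
- exact: idops0.
- by have := idops_trans IH (idopsD H (idops0 x)); rewrite addn0 addn1.
- by have := idops_trans IH (idopsI H (idops0 x)); rewrite addn0 addn1.
Qed.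

Lemma idops_cons a i j x y : idops i j x y -> idops i j (a :: x) (a :: y).
Proof.
elim=> {i j x y} [x|i j x y w H _ IH|i j x y w H _ IH].
- exact: idops0.
- by apply: idopsI IH; case: H => k Hk ->; exists k.+1.
- by apply: idopsD IH; case: H => k Hk ->; exists k.+1.
Qed.

Lemma del1_split x y : del1 x y ->
  exists y1 a y2, x = y1 ++ a :: y2 /\ y = y1 ++ y2.
Proof.
case=> k Hk ->; case Ed: (drop k x) => [|a y2].
  by move: Hk (size_drop k x); rewrite Ed /=; lia.
exists (take k x), a, y2; split; first by rewrite -Ed cat_take_drop.
by rewrite -add1n -drop_drop Ed /= drop0.
Qed.

Lemma del1_subseq x y : del1 x y -> subseq y x.
Proof.
case/del1_split=> y1 [a [y2 [-> ->]]].
by apply: cat_subseq => //; apply: subseq_cons.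
Qed.

Lemma idops_size i j x y : idops i j x y -> size y + j = size x + i.
Proof.
elim=> {i j x y} [x|i j x y w H _ IH|i j x y w H _ IH] //.
- by case/del1_split: H IH => y1 [a [y2 [-> ->]]]; rewrite !size_cat /=; lia.
- by case/del1_split: H IH => y1 [a [y2 [-> ->]]]; rewrite !size_cat /=; lia.
Qed.

Lemma idops_mask (m : bitseq) x : size m = size x ->
  idops 0 (size x - count id m) x (mask m x).
Proof.
elim: x m => [|a x IH] [|b m] //=; first by move=> _; exact: idops0.
case=> Hs; have Hc : count id m <= size x by rewrite -Hs count_size.
case: b => /=.
- by rewrite add1n subSS; exact: idops_cons (IH _ Hs).
- by rewrite add0n subSn //; apply: idopsD (IH _ Hs); exists 0 => //=; rewrite drop0.
Qed.

Lemma idops_subseq w x : subseq w x -> idops 0 (size x - size w) x w.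
Proof. by case/subseqP=> m Hs ->; rewrite size_mask //; exact: idops_mask. Qed.

Lemma subseq_delete w y1 a y2 : subseq w (y1 ++ a :: y2) ->
  exists2 w', subseq w' w & subseq w' (y1 ++ y2) /\ size w <= (size w').+1.
Proof.
elim: y1 w => [|b y1 IH] [|c w] Hw; try by exists [::]; rewrite ?sub0seq.
- move: Hw; rewrite [subseq _ _]/=; case: eqP => _ Hw.
    by exists w; rewrite ?subseq_cons.
  by exists (c :: w).
- move: Hw; rewrite [subseq _ _]/=; case: eqP => [-> | _] Hw.
    have [w' Hw' [Hy Hs]] := IH _ Hw.
    by exists (b :: w'); rewrite [subseq _ _]/= ?eqxx.
  have [w' Hw' [Hy Hs]] := IH _ Hw; exists w' => //; split => //.
  exact: subseq_trans Hy (subseq_cons _ _).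
Qed.

Lemma idops_common_subseq i j x z : idops i j x z ->
  exists w, [/\ subseq w x, subseq w z & size x <= size w + j].
Proof.
elim=> {i j x z} [x|i j x y z H _ IH|i j x y z H _ IH].
- by exists x; rewrite addn0.
- case/del1_split: H IH => y1 [a [y2 [-> ->]]] [w [Hy Hz Hs]].
  have [w' Hw' [Hx Hs']] := subseq_delete Hy.
  exists w'; split => //; first exact: subseq_trans Hw' Hz.
  by move: Hs; rewrite !size_cat /=; lia.
- case: IH => w [Hy Hz Hs]; exists w; split => //.
    exact: subseq_trans Hy (del1_subseq H).
  by have := idops_size (idopsD H (idops0 y)); lia.
Qed.

Lemma edits_common_subseq w x y : subseq w x -> subseq w y ->
  edits ((size x - size w) + (size y - size w)) x y.
Proof.
move=> Hx Hy; exists (size y - size w), (size x - size w); split; first exact: addnC.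
by have := idops_trans (idops_subseq Hx) (idops_sym (idops_subseq Hy)); rewrite add0n addn0.
Qed.

Lemma edits_lev_dist k x y : edits k x y -> exists2 k0, k0 <= k & lev_dist_is x y k0.
Proof.
pose p n := if excluded_middle_informative (edits n x y) then true else false.
have pP n : reflect (edits n x y) (p n).
  by rewrite /p; case: excluded_middle_informative => h; constructor.
move=> Hk; have ex_p : exists n, p n by exists k; apply/pP.
case: (ex_minnP ex_p) => k0 /pP Hk0 min_k0; exists k0; first exact/min_k0/pP.
by split=> // k' /pP; apply: min_k0.
Qed.

Lemma ballL_common_subseq v (ni nd : nat) x : in_ballL v ni nd x ->
  exists w, [/\ subseq w v, subseq w x, size v <= size w + nd & size x <= size w + ni].
Proof.
case=> i [j [le_i le_j vx]]; have [w [wv wx le_v]] := idops_common_subseq vx.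
by exists w; split=> //; have := idops_size vx; lia.
Qed.

End EditOperations.

Fixpoint meetb (m1 m2 : bitseq) : bitseq :=
  if (m1, m2) is (b1 :: m1', b2 :: m2') then (b1 && b2) :: meetb m1' m2' else [::].

Lemma meetbC m1 m2 : meetb m1 m2 = meetb m2 m1.
Proof. by elim: m1 m2 => [|b m IH] [|b' m'] //=; rewrite andbC IH. Qed.

Lemma meetbb m : meetb m m = m.
Proof. by elim: m => [|b m IH] //=; rewrite andbb IH. Qed.

Lemma nth_meetb m1 m2 p :
  nth false (meetb m1 m2) p = nth false m1 p && nth false m2 p.
Proof. by elim: m1 m2 p => [|b m IH] [|b' m'] [|p] //=; rewrite ?andbF ?nth_nil. Qed.

Lemma size_meetb m1 m2 : size (meetb m1 m2) = minn (size m1) (size m2).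
Proof. by elim: m1 m2 => [|b m IH] [|b' m'] //=; rewrite IH minnSS. Qed.

Lemma mask_meetb_subseq (T : eqType) m1 m2 (s : seq T) :
  subseq (mask (meetb m1 m2) s) (mask m1 s).
Proof.
elim: m1 m2 s => [|b m IH] [|b' m'] [|a s]; rewrite ?sub0seq ?mask0 //.
case: b b' => [] [] /=; rewrite ?eqxx ?IH //.
exact: subseq_trans (IH m' s) (subseq_cons _ _).
Qed.

Lemma masks_of_common_subseqs (T : eqType) (I : finType) (f : I -> seq T)
    (S : {set I}) (v : seq T) (L : nat) :
  (forall c, c \in S -> exists2 w, subseq w v & subseq w (f c) /\ L <= size w) ->
  exists mk : I -> bitseq, forall c, c \in S ->
    [/\ size (mk c) = size v, count id (mk c) = L & subseq (mask (mk c) v) (f c)].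
Proof.
move=> common; suff /fin_all_exists[mk mkP] : forall c, exists m : bitseq, c \in S ->
    [/\ size m = size v, count id m = L & subseq (mask m v) (f c)].
  by exists mk.
move=> c; have [Sc | _] := boolP (c \in S); last by exists [::].
have [w wv [wc le_L]] := common c Sc.
have /subseqP[m size_m mE] : subseq (take L w) v := subseq_trans (take_subseq w L) wv.
exists m => _; split=> //; last by rewrite -mE (subseq_trans (take_subseq w L)).
by rewrite -(size_mask size_m) -mE size_takel.
Qed.

Section Codes.
Variables (Sigma : finType) (n : nat) (C : {set n.-tuple Sigma}) (d : nat).
Hypothesis C_d : min_lev_dist C d.

Lemma min_lev_dist_common_subseq (c c' : n.-tuple Sigma) w :
  c \in C -> c' \in C -> c != c' -> subseq w c -> subseq w c' ->
  d + 2 * size w <= 2 * n.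
Proof.
move=> Cc Cc' ne_cc' wc wc'.
have [k le_k ck] := edits_lev_dist (edits_common_subseq wc wc').
have := C_d.2 _ _ _ Cc Cc' ne_cc' ck; have := size_subseq wc.
by rewrite !size_tuple in le_k *; lia.
Qed.

Lemma min_lev_dist_le : d <= 2 * n.
Proof.
have [c [c' [Cc Cc' ne_cc' _]]] := C_d.1.
by have := min_lev_dist_common_subseq Cc Cc' ne_cc' (sub0seq c) (sub0seq c'); lia.
Qed.

Lemma ballL_masks (S : {set n.-tuple Sigma}) v tI tD : S \subset C ->
    (forall c, c \in S -> in_ballL v tD tI (val c)) ->
  exists mk : n.-tuple Sigma -> bitseq,
  [/\ forall c, c \in S -> size (mk c) = size v,
      forall c, c \in S -> count id (mk c) = maxn (size v - tI) (n - tD) &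
      forall c c', c \in S -> c' \in S -> c != c' ->
        d + 2 * count id (meetb (mk c) (mk c')) <= 2 * n].
Proof.
move=> sub_SC S_ball.
have [|mk mkP] := @masks_of_common_subseqs _ _ val S v (maxn (size v - tI) (n - tD)).
  move=> c /S_ball/ballL_common_subseq[w [wv wc le_v le_c]]; exists w => //; split => //.
  rewrite size_tuple in le_c.
  by rewrite geq_max !leq_subLR !(addnC _ (size w)) le_v le_c.
exists mk; split=> [c /mkP[] | c /mkP[] | c c' Sc Sc' ne_cc'] //.
have [size_c _ mkc] := mkP c Sc; have [size_c' _ mkc'] := mkP c' Sc'.
have w_c := subseq_trans (mask_meetb_subseq (mk c) (mk c') v) mkc.
have w_c' : subseq (mask (meetb (mk c) (mk c')) v) c'.
  by rewrite meetbC; exact: subseq_trans (mask_meetb_subseq _ _ _) mkc'.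
have := min_lev_dist_common_subseq (subsetP sub_SC _ Sc) (subsetP sub_SC _ Sc') ne_cc' w_c w_c'.
by rewrite size_mask // size_meetb size_c size_c' minnn.
Qed.

End Codes.

Local Open Scope ring_scope.

Lemma natr_count_nth (R : pzSemiRingType) (m : bitseq) N : size m = N ->
  (count id m)%:R = \sum_(p < N) ((nth false m p : nat)%:R : R).
Proof.
move=> <-; elim: m => [|b m IH] /=; first by rewrite big_ord0.
by rewrite big_ord_recl /= natrD IH.
Qed.

Lemma sqr_sum_le (R : realFieldType) N (a : 'I_N -> R) :
  (\sum_p a p) ^+ 2 <= N%:R * \sum_p a p ^+ 2.
Proof.
set K := \sum_p a p; set Q := \sum_p a p ^+ 2.
have sum_sqr : \sum_(p < N) (N%:R * a p - K) ^+ 2 = N%:R * (N%:R * Q - K ^+ 2).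
  rewrite (eq_bigr (fun p => N%:R ^+ 2 * a p ^+ 2 - (2 * N%:R * K) * a p + K ^+ 2));
    last by move=> p _; ring.
  by rewrite big_split sumrB /= -!mulr_sumr sumr_const card_ord -/K -/Q -mulr_natr; ring.
have : 0 <= \sum_(p < N) (N%:R * a p - K) ^+ 2.
  by apply: sumr_ge0 => p _; exact: sqr_ge0.
rewrite sum_sqr; case: N a @K @Q {sum_sqr} => [|N] a K Q.
  by rewrite /K big_ord0 expr2 !mul0r.
by rewrite pmulr_rge0 ?ltr0n // subr_ge0.
Qed.

Section ConstantWeightMasks.
Variables (I : finType) (S : {set I}) (mk : I -> bitseq) (N : nat).
Hypothesis size_mk : forall c, c \in S -> size (mk c) = N.

Lemma sum_sqr_column_sums (R : pzSemiRingType) :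
  \sum_(p < N) (\sum_(c in S) ((nth false (mk c) p : nat)%:R : R)) ^+ 2 =
  \sum_(c in S) \sum_(c' in S) (count id (meetb (mk c) (mk c')))%:R.
Proof.
under eq_bigr => p _.
  rewrite expr2 big_distrl; under eq_bigr => c _ do rewrite big_distrr.
  over.
rewrite exchange_big; apply: eq_bigr => c Sc; rewrite exchange_big.
apply: eq_bigr => c' Sc'.
rewrite (natr_count_nth _ (N := N)); last by rewrite size_meetb !size_mk ?minnn.
by apply: eq_bigr => p _ /=; rewrite nth_meetb -natrM mulnb.
Qed.

Variable L : nat.
Hypothesis count_mk : forall c, c \in S -> count id (mk c) = L.

Lemma sum_column_sums (R : pzSemiRingType) :
  \sum_(p < N) \sum_(c in S) ((nth false (mk c) p : nat)%:R : R) = #|S|%:R * L%:R.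
Proof.
rewrite exchange_big /= (eq_bigr (fun _ => L%:R)) ?sumr_const ?mulr_natl // => c Sc.
by rewrite -(natr_count_nth _ (size_mk Sc)) count_mk.
Qed.

Lemma sum_meetb_le (R : numDomainType) (P : R) :
  (forall c c', c \in S -> c' \in S -> c != c' -> (count id (meetb (mk c) (mk c')))%:R <= P) ->
  \sum_(c in S) \sum_(c' in S) ((count id (meetb (mk c) (mk c')))%:R : R) <=
  #|S|%:R * (#|S|%:R * P + (L%:R - P)).
Proof.
move=> meet_le; rewrite [X in _ <= X]mulr_natl -sumr_const; apply: ler_sum => c Sc.
apply: le_trans (_ : \sum_(c' in S) (P + (c' == c)%:R * (L%:R - P)) <= _).
  apply: ler_sum => c' Sc'; have [-> | ne_c'c] := eqVneq c' c.
    by rewrite meetbb count_mk // mul1r addrC subrK.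
  by rewrite mul0r addr0 meet_le // eq_sym.
rewrite big_split sumr_const mulr_natl /= (bigD1 c) //= eqxx mul1r big1 ?addr0 //.
by move=> c' /andP[_ /negbTE ->]; rewrite mul0r.
Qed.

Lemma johnson_count (R : realFieldType) (P : R) : (0 < #|S|)%N ->
  (forall c c', c \in S -> c' \in S -> c != c' -> (count id (meetb (mk c) (mk c')))%:R <= P) ->
  #|S|%:R * (L%:R ^+ 2 - N%:R * P) <= N%:R * (L%:R - P).
Proof.
move=> S_gt0 /sum_meetb_le meet_le; set m : R := #|S|%:R.
have m_gt0 : 0 < m by rewrite ltr0n.
have key : (m * L%:R) ^+ 2 <= N%:R * (m * (m * P + (L%:R - P))).
  rewrite -sum_column_sums; apply: le_trans (sqr_sum_le _) _.
  by rewrite sum_sqr_column_sums ler_wpM2l.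
rewrite -(ler_pM2l m_gt0).
have -> : m * (m * (L%:R ^+ 2 - N%:R * P)) = (m * L%:R) ^+ 2 - N%:R * (m * (m * P)) by ring.
have -> : m * (N%:R * (L%:R - P)) = N%:R * (m * (m * P + (L%:R - P))) - N%:R * (m * (m * P)).
  by ring.
by rewrite lerD2r.
Qed.

End ConstantWeightMasks.

(* A convex quadratic with [q 0 <= 0] satisfies [q x0 / x0 <= q x / x] for [0 < x0 <= x]. *)
Lemma quadratic_ratio_le (R : realDomainType) (a b c x0 x : R) :
  0 <= a -> c <= 0 -> 0 <= x0 -> x0 <= x ->
  x * (a * x0 ^+ 2 + b * x0 + c) <= x0 * (a * x ^+ 2 + b * x + c).
Proof.
move=> a_ge0 c_le0 x0_ge0 le_x0x; rewrite -subr_ge0.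
have -> : x0 * (a * x ^+ 2 + b * x + c) - x * (a * x0 ^+ 2 + b * x0 + c) =
          (x - x0) * (a * x * x0 - c) by ring.
apply: mulr_ge0; first by rewrite subr_ge0.
by rewrite subr_ge0 (le_trans c_le0) // !mulr_ge0 // (le_trans x0_ge0).
Qed.

Lemma quadratic_ge0_le (R : realDomainType) (a b c x0 x : R) :
  0 <= a -> c <= 0 -> 0 < x0 -> x0 <= x ->
  0 <= a * x0 ^+ 2 + b * x0 + c -> 0 <= a * x ^+ 2 + b * x + c.
Proof.
move=> a_ge0 c_le0 x0_gt0 le_x0x q0_ge0.
have := quadratic_ratio_le b a_ge0 c_le0 (ltW x0_gt0) le_x0x.
rewrite -(pmulr_rge0 _ x0_gt0); apply: le_trans.
by rewrite mulr_ge0 // (le_trans (ltW x0_gt0)).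
Qed.

Lemma quadratic_gt0_le (R : realDomainType) (a b c x0 x : R) :
  0 <= a -> c <= 0 -> 0 < x0 -> x0 <= x ->
  0 < a * x0 ^+ 2 + b * x0 + c -> 0 < a * x ^+ 2 + b * x + c.
Proof.
move=> a_ge0 c_le0 x0_gt0 le_x0x q0_gt0.
have := quadratic_ratio_le b a_ge0 c_le0 (ltW x0_gt0) le_x0x.
rewrite -(pmulr_rgt0 _ x0_gt0); apply: lt_le_trans.
by rewrite mulr_gt0 // (lt_le_trans x0_gt0).
Qed.

Lemma deltaID_gapE (R : realFieldType) (tI tD delta : R) : 0 <= tI -> tD < 1 ->
  (delta - deltaID tI tD) * (tI + 1 - tD) = delta * (tI + 1 - tD) - (tI + tD * (1 - tD)).
Proof. by move=> tI_ge0 tD_lt1; rewrite /deltaID; field; rewrite gt_eqF //; lra. Qed.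

(* [L] is the mask weight, [N] the length of the received word and [n - delta n]
   the bound on the overlap of two masks. *)
Lemma list_size_bound (R : realFieldType) (tI tD delta n N L m : R) :
  0 <= tI -> 0 <= tD -> tD < 1 -> deltaID tI tD < delta ->
  0 < n -> delta <= 1 -> n - tD * n <= L -> N <= L + tI * n ->
  m * (L ^+ 2 - N * (n - delta * n)) <= N * (L - (n - delta * n)) ->
  m <= delta * (tI + 1) / ((delta - deltaID tI tD) * (tI + 1 - tD)).
Proof.
move=> tI_ge0 tD_ge0 tD_lt1 delta_gt n_gt0 delta_le1 L0_le N_le johnson.
set D := tI + 1 - tD; set G := (delta - deltaID tI tD) * D; set X := _ / G.
have D_gt0 : 0 < D by rewrite /D; lra.
have G_gt0 : 0 < G by rewrite /G mulr_gt0 // subr_gt0.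
have GE : G = delta * D - (tI + tD * (1 - tD)) by exact: deltaID_gapE.
have tD_sqr : 0 <= tD * (1 - tD) by rewrite mulr_ge0 // subr_ge0 ltW.
have delta_ge0 : 0 <= delta.
  have : 0 < delta * D by move: G_gt0; rewrite GE; lra.
  by rewrite pmulr_lgt0 // => /ltW.
have XG : X * G = delta * (tI + 1) by rewrite /X divfK // gt_eqF.
have X_ge1 : 1 <= X.
  rewrite -(ler_pM2r G_gt0) mul1r XG GE /D.
  have : 0 <= delta * tD by rewrite mulr_ge0.
  lra.
set a := tI * n; set P := n - delta * n; set L0 := n - tD * n.
have a_ge0 : 0 <= a by rewrite mulr_ge0 // ltW.
have P_ge0 : 0 <= P by rewrite subr_ge0 ler_piMl // ltW.
have L0_gt0 : 0 < L0 by rewrite subr_gt0 gtr_pMl.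
have HL_gt0 : 0 < 1 * L ^+ 2 + (- P) * L + - (a * P).
  apply: (quadratic_gt0_le ler01 _ L0_gt0 L0_le); first by rewrite oppr_le0; apply: mulr_ge0.
  have -> : 1 * L0 ^+ 2 + - P * L0 + - (a * P) = n ^+ 2 * G by rewrite GE /D /L0 /P /a; ring.
  by rewrite mulr_gt0 ?exprn_gt0.
have X1_ge0 : 0 <= X - 1 by rewrite subr_ge0.
have q_ge0 : 0 <= (X - 1) * L ^+ 2 + (- ((X - 1) * P + a)) * L + - ((X - 1) * a * P).
  apply: (quadratic_ge0_le X1_ge0 _ L0_gt0 L0_le).
    by rewrite oppr_le0; apply: mulr_ge0 (mulr_ge0 X1_ge0 a_ge0) P_ge0.
  have -> : (X - 1) * L0 ^+ 2 + - ((X - 1) * P + a) * L0 + - ((X - 1) * a * P) =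
            n ^+ 2 * (X * G - D * (delta - tD)) by rewrite GE /D /L0 /P /a; ring.
  rewrite XG mulr_ge0 ?sqr_ge0 // /D; nra.
have L_gt0 : 0 < L := lt_le_trans L0_gt0 L0_le.
have den_gt0 : 0 < L ^+ 2 - N * P.
  have : N * P <= (L + a) * P by rewrite ler_wpM2r.
  lra.
have num_le : N * (L - P) <= X * (L ^+ 2 - N * P).
  have : N * (L + (X - 1) * P) <= (L + a) * (L + (X - 1) * P).
    by rewrite ler_wpM2r // addr_ge0 ?mulr_ge0 // ltW.
  lra.
by rewrite -(ler_pM2r den_gt0) (le_trans johnson).
Qed.

Lemma natr_subn_truncn (R : archiRealDomainType) (m : nat) (x : R) :
  0 <= x -> m%:R - x <= (m - Num.truncn x)%:R.
Proof.
move=> x_ge0; have : (m <= Num.truncn x + (m - Num.truncn x))%N by rewrite -leq_subLR.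
rewrite -(ler_nat R) natrD; have : (Num.truncn x)%:R <= x by rewrite truncn_le.
lra.
Qed.

Theorem mainTheorem4 (R : archiRealFieldType) (tauI tauD : R)
  (Sigma : finType) (n : nat) (C : {set n.-tuple Sigma}) (d : nat) (delta : R) :
  0 <= tauI -> 0 <= tauD -> tauD < 1 ->
  (1 < #|C|)%N ->
  min_lev_dist C d ->
  d%:R = 2 * delta * n%:R ->
  deltaID tauI tauD < delta ->
  let gamma := delta - deltaID tauI tauD in
  list_decodable C (Num.truncn (tauI * n%:R)) (Num.truncn (tauD * n%:R))
    (Num.truncn ((delta * (tauI + 1)) / (gamma * (tauI + 1 - tauD)))).
Proof.
move=> tauI_ge0 tauD_ge0 tauD_lt1 C_gt1 C_d dE delta_gt gamma v S sub_SC S_ball.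
have [-> // | S_gt0] := posnP #|S|.
have n_gt0 : 0 < n%:R :> R.
  by have := leq_trans C_gt1 (max_card C); rewrite card_tuple ltr0n; case: (n).
have delta_le1 : delta <= 1.
  have := min_lev_dist_le C_d; rewrite -(ler_nat R) natrM dE => le_d.
  by rewrite -(ler_pM2r n_gt0) mul1r; lra.
have [mk [size_mk count_mk meet_le]] := ballL_masks C_d sub_SC S_ball.
set L := maxn _ _ in count_mk.
have meet_leR c c' : c \in S -> c' \in S -> c != c' ->
    (count id (meetb (mk c) (mk c')))%:R <= n%:R - delta * n%:R :> R.
  by move=> Sc Sc' /(meet_le c c' Sc Sc'); rewrite -(ler_nat R) natrD !natrM dE; lra.
have L0_le : n%:R - tauD * n%:R <= L%:R.
  apply: le_trans (natr_subn_truncn _ (mulr_ge0 tauD_ge0 (ltW n_gt0))) _.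
  by rewrite ler_nat leq_maxr.
have N_le : (size v)%:R <= L%:R + tauI * n%:R.
  rewrite -lerBlDr; apply: le_trans (natr_subn_truncn _ (mulr_ge0 tauI_ge0 (ltW n_gt0))) _.
  by rewrite ler_nat leq_maxl.
have := list_size_bound tauI_ge0 tauD_ge0 tauD_lt1 delta_gt n_gt0 delta_le1 L0_le N_le
  (johnson_count size_mk count_mk S_gt0 meet_leR).
by move=> le_S; rewrite truncn_ge_nat // (le_trans _ le_S).
Qed.
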